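(* In the setting below, for $x\in V_1$, $\lambda\in F^\times$ and $y\in\mathrm{GSpin}(V_1)(F)$, the element $n(x)m(\lambda,y)$ lies in $\mathrm{Clif}(\Lambda)$ if and only if $y$, $\lambda y$ and $xy$ all lie in $\mathrm{Clif}(\Lambda_1)$.
   Context: $F$ is a $p$-adic local field with ring of integers $\mathcal{O}_F$. $V$ is a quasisplit quadratic space: $V=U^\vee\oplus V_E\oplus U$, $U^\vee=\mathrm{span}(e_1,\dots,e_n)$, $U=\mathrm{span}(f_1,\dots,f_n)$ isotropic, $(e_i,f_j)=\delta_{ij}$ for the bilinear form $(v,w)=q(v+w)-q(v)-q(w)$, $V_E\perp U^\vee\oplus U$ identified with $E$ with form $N_{E/F}$ ($E=F$, $N(t)=t^2$, or $E$ quadratic étale); $n\ge1$. $\Lambda=\bigoplus\mathcal{O}_Fe_i\oplus\mathcal{O}_E\oplus\bigoplus\mathcal{O}_Ff_i$; $V_1=\mathrm{span}(e_2,\dots,e_n,f_2,\dots,f_n)\oplus V_E$, so $V=Fe_1\oplus V_1\oplus Ff_1$; $\Lambda_1=\Lambda\cap V_1$. $\mathrm{Clif}(\cdot)$ denotes Clifford algebras (tensor algebra modulo $v\otimes v-q(v)$), $\mathrm{Clif}(V_1)\subseteq\mathrm{Clif}(V)$, and for a lattice $L$, $\mathrm{Clif}(L)$ is the $\mathcal{O}_F$-subalgebra generated by $L$. $\mathrm{GSpin}(V_1)(F)=\{g\in\mathrm{Clif}^+(V_1):g^*g\in F^\times,\ g^*V_1g\subseteq V_1\}$ with $*$ the order-reversing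 anti-involution. Products below are in $\mathrm{Clif}(V)$: $n(x)=1+f_1x$ for $x\in V_1$, and $m(\lambda,y)=(e_1f_1+\lambda f_1e_1)\,y$. *)

From HB Require Import structures.
From mathcomp Require Import all_boot all_order all_algebra all_field.
Set Implicit Arguments. Unset Strict Implicit. Unset Printing Implicit Defensive.
Import GRing.Theory.
Local Open Scope ring_scope.

(* p-adic local field: F is a field of characteristic 0 and O (= O_F)  *)
(* is a complete discrete valuation ring with fraction field F and     *)
(* finite residue field, i.e. F is a finite extension of Q_p.          *)
Definition padic_local_field (F : fieldType) (O : pred F) : Prop :=
  [/\
      forall k : nat, (k.+1)%:R != 0 :> F,
      [/\ O 1, forall a b, O a -> O b -> O (a - b)
        & forall a b, O a -> O b -> O (a * b)]
    & exists2 pi : F, O pi /\ ~ O pi^-1 /\ pi != 0 &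
      [/\
          forall x : F, x != 0 ->
            exists (u : F) (k : int), [/\ O u, O u^-1 & x = u * pi ^ k],
          (* finite residue field O / pi O *)
          exists s : seq F, all O s /\
            forall a, O a -> exists2 r, r \in s & O ((a - r) / pi)
        & (* completeness for the pi-adic topology *)
          forall a : nat -> F,
            (forall k, O (a k)) ->
            (forall k, O ((a k.+1 - a k) / pi ^+ k)) ->
            exists l : F, forall k, O ((l - a k) / pi ^+ k)]].

(* The algebra E: either E = F (with N(t) = t^2) or E a quadratic      *)
(* etale F-algebra (with N its norm).  E is given as a commutative     *)
Definition alg_norm (F : fieldType) (E : falgType F) (x : E) : F :=
  \det (passmx.mxof (vbasis {:E}) (vbasis {:E}) (amulr x)).

Definition E_setting (F : fieldType) (E : falgType F) (N : E -> F) : Prop :=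
  (forall x y : E, x * y = y * x) /\
  (
    (\dim {:E} = 1%N /\ forall c : F, N (c%:A) = c ^+ 2)
  \/
    (* E quadratic etale (reduced = etale since char F = 0), N = norm *)
    [/\ \dim {:E} = 2%N,
        (forall (x : E) (k : nat), x ^+ k = 0 -> x = 0)
      & forall x : E, N x = alg_norm x]).

(* O_E: the integral closure of O in E *)
Definition integral_over (F : fieldType) (O : pred F) (E : falgType F) (e : E) :=
  exists p : {poly F}, [/\ p \is monic, forall i, O p`_i
                         & (map_poly (in_alg E) p).[e] = 0].

(* The quadratic space V = U^vee (+) V_E (+) U, with U^vee = F^n (basis *)
(* e_i) and U = F^n (basis f_i); an element ((u, w), t) stands for     *)
(* sum_i u_i e_i + w + sum_i t_i f_i.                                  *)
Section Space.
Variables (F : fieldType) (E : falgType F) (N : E -> F) (n : nat).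

Definition Vsp : lmodType F := (('rV[F]_n * E) * 'rV[F]_n)%type.

Definition qV (v : Vsp) : F :=
  \sum_(i < n) v.1.1 0 i * v.2 0 i + N v.1.2.

Definition Lam (O : pred F) (v : Vsp) : Prop :=
  [/\ forall i, O (v.1.1 0 i), integral_over O v.1.2 & forall i, O (v.2 0 i)].

End Space.

Section Space1.
Variables (F : fieldType) (E : falgType F) (n : nat).
Local Notation V := (Vsp E n.+1).

Definition e1 : V := ((delta_mx 0 0, 0), 0).
Definition f1 : V := ((0, 0), delta_mx 0 0).

(* V_1 = span(e_2..e_n, f_2..f_n) (+) V_E *)
Definition V1 (v : V) : Prop := v.1.1 0 0 = 0 /\ v.2 0 0 = 0.
End Space1.

Definition alg_morph (F : fieldType) (A B : algType F) (g : A -> B) : Prop :=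
  linear g /\ monoid_morphism g.

Definition is_clifford (F : fieldType) (V : lmodType F) (q : V -> F)
    (C : algType F) (iota : V -> C) : Prop :=
  [/\ linear iota,
      forall v, iota v * iota v = (q v)%:A
    & forall (B : algType F) (f : V -> B), linear f ->
        (forall v, f v * f v = (q v)%:A) ->
        (exists g : C -> B, alg_morph g /\ forall v, g (iota v) = f v) /\
        (forall g1 g2 : C -> B, alg_morph g1 -> alg_morph g2 ->
           (forall v, g1 (iota v) = f v) -> (forall v, g2 (iota v) = f v) ->
           forall z, g1 z = g2 z)].

Inductive gen_alg (F : fieldType) (C : algType F) (R : pred F) (S : C -> Prop)
  : C -> Prop :=
| gen_one : gen_alg R S 1
| gen_in x : S x -> gen_alg R S x
| gen_add x y : gen_alg R S x -> gen_alg R S y -> gen_alg R S (x + y)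
| gen_mul x y : gen_alg R S x -> gen_alg R S y -> gen_alg R S (x * y)
| gen_scale a x : R a -> gen_alg R S x -> gen_alg R S (a *: x).

Section Clif.
Variables (F : fieldType) (V : lmodType F) (C : algType F) (iota : V -> C).

(* Clif(L) for an R-lattice L (R = O_F), resp. Clif(W) for an F-subspace *)
Definition Clif (R : pred F) (L : V -> Prop) : C -> Prop :=
  gen_alg R (fun z => exists2 v, L v & z = iota v).

Definition Clif_even (W : V -> Prop) : C -> Prop :=
  gen_alg predT (fun z => exists v w, [/\ W v, W w & z = iota v * iota w]).

Definition is_star (s : C -> C) : Prop :=
  [/\ linear s, s 1 = 1, (forall a b, s (a * b) = s b * s a),
      (forall v, s (iota v) = iota v) & forall z, s (s z) = z].

Definition GSpin (W : V -> Prop) (g : C) : Prop :=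
  Clif_even W g /\
  forall s, is_star s ->
    (exists2 c : F, c != 0 & s g * g = c%:A) /\
    (forall v, W v -> exists2 w, W w & s g * iota v * g = iota w).
End Clif.

(* Sending e_1, f_1 to the matrix units E_12, E_21 and v in V_1 to diag(v, -v)
   respects the Clifford relations, so the universal property yields an algebra
   map g : Clif(V) -> M_2(Clif(V)).  It carries Clif(Lambda) into matrices with
   entries in Clif(Lambda_1), is the scalar embedding on Clif^+(V_1), and sends
   n(x) m(lam, y) to [[y, 0], [x y, lam y]]; this gives one direction.
   Conversely, the Clifford relations rewrite n(x) m(lam, y) as
   e_1 f_1 y + f_1 e_1 (lam y) + f_1 (x y), which visibly lies in Clif(Lambda). *)
From HB Require Import structures.
From mathcomp Require Import all_boot all_order all_algebra all_field.
Set Implicit Arguments. Unset Strict Implicit. Unset Printing Implicit Defensive.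
Import GRing.Theory.
Local Open Scope ring_scope.

Section MatrixAlgebra.
Variables (F : fieldType) (C : algType F) (k : nat).

(* matrix.v only makes ['M[C]_k.+1] a [C]-module; here [F] acts entrywise. *)
Definition mxalg := 'M[C]_k.+1.
HB.instance Definition _ := GRing.NzRing.on mxalg.

Definition mxalg_scale (a : F) (A : mxalg) : mxalg := map_mx ( *:%R a) A.

Lemma mxalg_scaleA a b A : mxalg_scale a (mxalg_scale b A) = mxalg_scale (a * b) A.
Proof. by apply/matrixP => i j; rewrite !mxE scalerA. Qed.
Lemma mxalg_scale1 : left_id 1 mxalg_scale.
Proof. by move=> A; apply/matrixP => i j; rewrite !mxE scale1r. Qed.
Lemma mxalg_scaleDr : right_distributive mxalg_scale +%R.
Proof. by move=> a A B; apply/matrixP => i j; rewrite !mxE scalerDr. Qed.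
Lemma mxalg_scaleDl A : {morph mxalg_scale^~ A : a b / a + b}.
Proof. by move=> a b; apply/matrixP => i j; rewrite !mxE scalerDl. Qed.
HB.instance Definition _ := GRing.Zmodule_isLmodule.Build F mxalg
  mxalg_scaleA mxalg_scale1 mxalg_scaleDr mxalg_scaleDl.

Lemma mxalg_scaleE a (A : mxalg) i j : (a *: A) i j = a *: A i j.
Proof. exact: mxE. Qed.

Lemma mxalg_scaleAl a (A B : mxalg) : a *: (A * B) = (a *: A) * B.
Proof.
apply/matrixP => i j; rewrite !mxE scaler_sumr; apply: eq_bigr => l _.
by rewrite mxalg_scaleE scalerAl.
Qed.
HB.instance Definition _ := GRing.Lmodule_isLalgebra.Build F mxalg mxalg_scaleAl.

Lemma mxalg_scaleAr a (A B : mxalg) : a *: (A * B) = A * (a *: B).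
Proof.
apply/matrixP => i j; rewrite !mxE scaler_sumr; apply: eq_bigr => l _.
by rewrite mxalg_scaleE scalerAr.
Qed.
HB.instance Definition _ := GRing.Lalgebra_isAlgebra.Build F mxalg mxalg_scaleAr.

End MatrixAlgebra.

Section TwoByTwo.
Variables (F : fieldType) (C : algType F).

Definition mx2 (a b c d : C) : mxalg C 1 := \matrix_(i, j)
  if i == 0 :> nat then (if j == 0 :> nat then a else b)
  else (if j == 0 :> nat then c else d).

Lemma mx2E a b c d :
  [/\ mx2 a b c d 0 0 = a, mx2 a b c d 0 1 = b,
      mx2 a b c d 1 0 = c & mx2 a b c d 1 1 = d].
Proof. by rewrite !mxE. Qed.

Lemma mx2_entries (P : C -> Prop) a b c d :
  P a -> P b -> P c -> P d -> forall i j, P (mx2 a b c d i j).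
Proof. by move=> Pa Pb Pc Pd [[|[|//]] ?] [[|[|//]] ?]; rewrite mxE. Qed.

Lemma mx2_scalar z : z%:M = mx2 z 0 0 z.
Proof. by apply/matrixP => -[[|[|//]] ?] [[|[|//]] ?]; rewrite !mxE. Qed.

Lemma mx2_add a b c d a' b' c' d' :
  mx2 a b c d + mx2 a' b' c' d' = mx2 (a + a') (b + b') (c + c') (d + d').
Proof. by apply/matrixP => -[[|[|//]] ?] [[|[|//]] ?]; rewrite !mxE. Qed.

Lemma mx2_scale (l : F) a b c d :
  l *: mx2 a b c d = mx2 (l *: a) (l *: b) (l *: c) (l *: d).
Proof. by apply/matrixP => -[[|[|//]] ?] [[|[|//]] ?]; rewrite !mxE. Qed.

Lemma mx2_mul a b c d a' b' c' d' :
  mx2 a b c d * mx2 a' b' c' d' =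
  mx2 (a * a' + b * c') (a * b' + b * d') (c * a' + d * c') (c * b' + d * d').
Proof.
by apply/matrixP => -[[|[|//]] ?] [[|[|//]] ?];
  rewrite !mxE !big_ord_recl big_ord0 !mxE addr0.
Qed.

Lemma mx2_nm (x y : C) (lam : F) :
  (1 + mx2 0 0 1 0 * mx2 x 0 0 (- x)) *
    ((mx2 0 1 0 0 * mx2 0 0 1 0 + lam *: (mx2 0 0 1 0 * mx2 0 1 0 0)) * y%:M)
  = mx2 y 0 (x * y) (lam *: y).
Proof.
rewrite -idmxE !mx2_scalar !mx2_mul mx2_scale !mx2_add !mx2_mul.
rewrite !(mul0r, mulr0, mul1r, mulr1, add0r, addr0, scaler0, scale1r).
by rewrite mulr_algl.
Qed.

End TwoByTwo.

Section GeneratedAlgebra.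
Variables (F : fieldType) (R : pred F).
Hypotheses (R1 : R 1) (RB : forall a b, R a -> R b -> R (a - b)).

Lemma subring0 : R 0.
Proof. by rewrite -(subrr 1); exact: RB. Qed.

Lemma gen_alg_scalar (C : algType F) (S : C -> Prop) (a : F) :
  R a -> gen_alg R S a%:A.
Proof. by move=> Ra; apply: gen_scale Ra (gen_one _ _). Qed.

Lemma gen_alg0 (C : algType F) (S : C -> Prop) : gen_alg R S 0.
Proof. by rewrite -(scale0r 1); exact: gen_alg_scalar subring0. Qed.

Lemma gen_algN (C : algType F) (S : C -> Prop) (z : C) :
  gen_alg R S z -> gen_alg R S (- z).
Proof.
by rewrite -scaleN1r -sub0r; apply: gen_scale; apply: RB subring0 R1.
Qed.

Lemma gen_alg_mono (C : algType F) (S S' : C -> Prop) (z : C) :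
  (forall w, S w -> S' w) -> gen_alg R S z -> gen_alg R S' z.
Proof.
move=> SS'; elim=> *.
- exact: gen_one.
- exact/gen_in/SS'.
- exact: gen_add.
- exact: gen_mul.
- exact: gen_scale.
Qed.

Variables (C D : algType F) (T : D -> Prop) (k : nat) (g : C -> mxalg D k).
Hypotheses (g_lin : linear g) (g_mul : monoid_morphism g).
HB.instance Definition _ := GRing.isLinear.Build F C (mxalg D k) _ g g_lin.
HB.instance Definition _ := GRing.isMonoidMorphism.Build C (mxalg D k) g g_mul.

Lemma gen_alg_mx_entries (S : C -> Prop) :
  (forall w, S w -> forall i j, gen_alg R T (g w i j)) ->
  forall z, gen_alg R S z -> forall i j, gen_alg R T (g z i j).
Proof.
move=> gS z; elim=> {z}.
- move=> i j; rewrite rmorph1 mxE.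
  by case: (i == j); [exact: gen_one | rewrite mulr0n; exact: gen_alg0].
- exact: gS.
- by move=> u w _ Hu _ Hw i j; rewrite raddfD mxE; apply: gen_add.
- move=> u w _ Hu _ Hw i j; rewrite rmorphM mxE.
  by elim/big_ind: _ => [|*|l _]; [exact: gen_alg0 | exact: gen_add | exact: gen_mul].
- by move=> a w Ra _ Hw i j; rewrite linearZ mxalg_scaleE; apply: gen_scale.
Qed.

End GeneratedAlgebra.

Lemma nm_expand (F : fieldType) (A : algType F) (e f x y : A) (lam : F) :
  f * f = 0 -> e * f + f * e = 1 -> x * e = - (e * x) -> x * f = - (f * x) ->
  (1 + f * x) * ((e * f + lam *: (f * e)) * y)
  = e * f * y + f * e * (lam *: y) + f * (x * y).
Proof.
move=> ff0 ef1 xe xf.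
have fxf : f * x * f = 0 by rewrite -mulrA xf mulrN mulrA ff0 mul0r oppr0.
have fef : f * e * f = f.
  by rewrite -mulrA -[e * f](addrK (f * e)) ef1 mulrBr mulr1 mulrA ff0 mul0r subr0.
have fxef : f * x * e * f = f * x.
  rewrite -(mulrA f) xe mulrN mulNr mulrA -(mulrA _ x) xf.
  by rewrite mulrN opprK mulrA fef.
rewrite mulrA mulrDl mul1r mulrDr -scalerAr !mulrA fxef fxf mul0r scaler0 addr0.
by rewrite !mulrDl -scalerAl scalerAr.
Qed.

Section Clifford.
Variables (F : fieldType) (V : lmodType F) (q : V -> F) (C : algType F) (iota : V -> C).
Hypotheses (iota_lin : linear iota) (iota_sqr : forall v, iota v * iota v = (q v)%:A).
HB.instance Definition _ := GRing.isLinear.Build F V C _ iota iota_lin.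

Lemma clifford_q0 : q 0 = 0.
Proof. by apply: (fmorph_inj (in_alg C)); rewrite /= -iota_sqr raddf0 mulr0 scale0r. Qed.

Lemma clifford_anticomm u w :
  iota u * iota w + iota w * iota u = (q (u + w) - q u - q w)%:A.
Proof.
rewrite !scalerBl -!iota_sqr raddfD /= mulrDl !mulrDr.
by rewrite -addrA -opprD (addrC (iota u * iota u)) addrACA addrK.
Qed.

Lemma clifford_anticomm_orth u w :
  q (u + w) = q u + q w -> iota u * iota w = - (iota w * iota u).
Proof.
by move=> quw; apply/eqP; rewrite -addr_eq0 clifford_anticomm quw addrAC addrK subrr scale0r.
Qed.

End Clifford.

Section SplitSpace.
Variables (F : fieldType) (E : falgType F) (N : E -> F) (n : nat).
Local Notation V := (Vsp E n.+1).
Local Notation q := (qV N (n:=n.+1)).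
Local Notation e1 := (@e1 F E n).
Local Notation f1 := (@f1 F E n).
Local Notation ecoord v := (v.1.1 0 0).
Local Notation fcoord v := (v.2 0 0).

Definition V1_proj (v : V) : V := v - fcoord v *: f1 - ecoord v *: e1.

Lemma V1_proj_V1 v : V1 (V1_proj v).
Proof. by split; rewrite !mxE /= ?mulr1 ?mulr0 ?subr0 subrr. Qed.

Lemma V1_projK v : V1 v -> V1_proj v = v.
Proof. by case=> ev fv; rewrite /V1_proj ev fv !scale0r !subr0. Qed.

Lemma V1_proj_linear : linear V1_proj.
Proof.
move=> a u w; rewrite /V1_proj /= !mxE !scalerDl !scalerBr !scalerA !opprD.
by rewrite (addrACA (a *: u)) [LHS]addrACA.
Qed.

Lemma V1_decomp v : v = V1_proj v + ecoord v *: e1 + fcoord v *: f1.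
Proof. by rewrite !subrK. Qed.

Lemma qV_split a b w : V1 w -> q (w + a *: e1 + b *: f1) = a * b + q w.
Proof.
case=> ew fw; rewrite /qV /= !scaler0 !addr0 [RHS]addrA; congr (_ + _).
rewrite !big_ord_recl !mxE /= ew fw !add0r !mulr1 mul0r add0r; congr (_ + _).
by apply: eq_bigr => i _; rewrite !mxE /= !mulr0 !addr0.
Qed.

Lemma qV_proj v : q v = ecoord v * fcoord v + q (V1_proj v).
Proof. by rewrite {1}(V1_decomp v) qV_split //; exact: V1_proj_V1. Qed.

Variable O : pred F.
Hypotheses (O1 : O 1) (OB : forall a b, O a -> O b -> O (a - b)).

Lemma Lam_V1_proj v : Lam O v -> Lam O (V1_proj v).
Proof.
move=> [Ou OE Ot]; have O0 := subring0 O1 OB.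
split=> [i||i]; rewrite ?mxE /= ?scaler0 ?subr0 //.
all: by rewrite mulr0 subr0; case: eqP => [->|_]; rewrite ?mulr1 ?subrr ?mulr0 ?subr0.
Qed.

Lemma integral_over0 : integral_over O (0 : E).
Proof.
exists 'X; split; rewrite ?monicX ?map_polyX ?hornerX // => i.
by rewrite coefX; case: eqP => _; [exact: O1 | exact: subring0 O1 OB].
Qed.

Lemma Lam_e1 : Lam O e1.
Proof.
have O0 := subring0 O1 OB.
by split=> [i||i]; rewrite ?mxE //=; [case: eqP | exact: integral_over0].
Qed.

Lemma Lam_f1 : Lam O f1.
Proof.
have O0 := subring0 O1 OB.
by split=> [i||i]; rewrite ?mxE //=; [exact: integral_over0 | case: eqP].
Qed.

End SplitSpace.

Section SplitClifford.
Variables (F : fieldType) (E : falgType F) (N : E -> F) (n : nat).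
Local Notation V := (Vsp E n.+1).
Local Notation q := (qV N (n:=n.+1)).
Local Notation e1 := (@e1 F E n).
Local Notation f1 := (@f1 F E n).
Local Notation ecoord v := (v.1.1 0 0).
Local Notation fcoord v := (v.2 0 0).
Variables (C : algType F) (iota : V -> C).
Hypotheses (iota_lin : linear iota) (iota_sqr : forall v, iota v * iota v = (q v)%:A).
HB.instance Definition _ := GRing.isLinear.Build F V C _ iota iota_lin.

Lemma V1_0 : V1 (0 : V).
Proof. by split; rewrite mxE. Qed.

Lemma qV_hyperbolic a b : q (a *: e1 + b *: f1) = a * b.
Proof.
rewrite -[a *: e1]add0r qV_split ?(clifford_q0 iota_lin iota_sqr) ?addr0 //.
exact: V1_0.
Qed.

Lemma qV_e1 : q e1 = 0.
Proof. by have := qV_hyperbolic 1 0; rewrite scale1r scale0r addr0 mulr0. Qed.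

Lemma qV_f1 : q f1 = 0.
Proof. by have := qV_hyperbolic 0 1; rewrite scale1r scale0r add0r mul0r. Qed.

Lemma qV_V1_e1 x : V1 x -> q (x + e1) = q x + q e1.
Proof.
by move=> x1; have := qV_split N 1 0 x1; rewrite scale1r scale0r addr0 mulr0 add0r qV_e1 addr0.
Qed.

Lemma qV_V1_f1 x : V1 x -> q (x + f1) = q x + q f1.
Proof.
move=> x1; have := qV_split N 0 1 x1.
by rewrite scale1r scale0r addr0 mul0r add0r qV_f1 addr0.
Qed.

Lemma iota_f1_sqr : iota f1 * iota f1 = 0.
Proof. by rewrite iota_sqr qV_f1 scale0r. Qed.

Lemma iota_e1f1_anticomm : iota e1 * iota f1 + iota f1 * iota e1 = 1.
Proof.
have := qV_hyperbolic 1 1; rewrite !scale1r mulr1 => qef.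
by rewrite (clifford_anticomm iota_lin iota_sqr) qef qV_e1 qV_f1 !subr0 scale1r.
Qed.

Lemma iota_V1_anticomm_e1 x : V1 x -> iota x * iota e1 = - (iota e1 * iota x).
Proof. by move=> x1; apply: (clifford_anticomm_orth iota_lin iota_sqr); exact: qV_V1_e1. Qed.

Lemma iota_V1_anticomm_f1 x : V1 x -> iota x * iota f1 = - (iota f1 * iota x).
Proof. by move=> x1; apply: (clifford_anticomm_orth iota_lin iota_sqr); exact: qV_V1_f1. Qed.

Variable O : pred F.
Hypotheses (O1 : O 1) (OB : forall a b, O a -> O b -> O (a - b)).
Local Notation Lam1 := (fun v => Lam O v /\ V1 v).

Lemma Clif_Lam_nm x lam y : V1 x ->
  Clif iota O Lam1 y -> Clif iota O Lam1 (lam *: y) -> Clif iota O Lam1 (iota x * y) ->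
  Clif iota O (Lam O)
    ((1 + iota f1 * iota x) * ((iota e1 * iota f1 + lam *: (iota f1 * iota e1)) * y)).
Proof.
move=> x1 y1 ly1 xy1.
have Lam1_Lam z : Clif iota O Lam1 z -> Clif iota O (Lam O) z.
  by apply: gen_alg_mono => _ [v [Lv _] ->]; exists v.
have e1_Lam : Clif iota O (Lam O) (iota e1).
  by apply: gen_in; exists e1; first exact: Lam_e1.
have f1_Lam : Clif iota O (Lam O) (iota f1).
  by apply: gen_in; exists f1; first exact: Lam_f1.
rewrite (nm_expand y lam iota_f1_sqr iota_e1f1_anticomm (iota_V1_anticomm_e1 x1)
  (iota_V1_anticomm_f1 x1)).
apply: gen_add; first apply: gen_add.
- exact: gen_mul (gen_mul e1_Lam f1_Lam) (Lam1_Lam _ y1).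
- exact: gen_mul (gen_mul f1_Lam e1_Lam) (Lam1_Lam _ ly1).
- exact: gen_mul f1_Lam (Lam1_Lam _ xy1).
Qed.

Definition clifford_mx (v : V) : mxalg C 1 :=
  mx2 (iota (V1_proj v)) (ecoord v)%:A (fcoord v)%:A (- iota (V1_proj v)).

Lemma clifford_mx_linear : linear clifford_mx.
Proof.
move=> a u w; rewrite /clifford_mx mx2_scale mx2_add /= !mxE.
by rewrite (V1_proj_linear a u w) iota_lin scalerN -opprD !scalerDl !scalerA.
Qed.

Lemma clifford_mx_sqr v : clifford_mx v * clifford_mx v = (q v)%:A.
Proof.
rewrite mx2_mul -idmxE mx2_scalar mx2_scale scaler0 (qV_proj N v).
congr mx2.
- by rewrite iota_sqr mulr_algl scalerA -scalerDl addrC.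
- by rewrite mulr_algr mulr_algl scalerN subrr.
- by rewrite mulr_algl mulr_algr scalerN subrr.
- by rewrite mulrNN iota_sqr mulr_algl scalerA -scalerDl mulrC.
Qed.

Lemma clifford_mx_V1 x : V1 x -> clifford_mx x = mx2 (iota x) 0 0 (- iota x).
Proof.
by move=> x1; rewrite /clifford_mx V1_projK //; case: x1 => -> ->; rewrite !scale0r.
Qed.

Lemma clifford_mx_e1 : clifford_mx e1 = mx2 0 1 0 0.
Proof.
rewrite /clifford_mx /V1_proj !mxE /= scale0r subr0 scale1r subrr.
by rewrite raddf0 oppr0 scale1r scale0r.
Qed.

Lemma clifford_mx_f1 : clifford_mx f1 = mx2 0 0 1 0.
Proof.
rewrite /clifford_mx /V1_proj !mxE /= scale0r subr0 scale1r subrr.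
by rewrite raddf0 oppr0 scale1r scale0r.
Qed.

Variable g : C -> mxalg C 1.
Hypotheses (g_lin : linear g) (g_mul : monoid_morphism g)
  (g_iota : forall v, g (iota v) = clifford_mx v).
HB.instance Definition _ := GRing.isLinear.Build F C (mxalg C 1) _ g g_lin.
HB.instance Definition _ := GRing.isMonoidMorphism.Build C (mxalg C 1) g g_mul.

Lemma clifford_mx_even z : Clif_even iota (@V1 F E n) z -> g z = z%:M.
Proof.
elim=> {z} [|_ [v [w [v1 w1 ->]]]|u w _ gu _ gw|u w _ gu _ gw|a u _ _ gu].
- by rewrite rmorph1 idmxE.
- rewrite rmorphM /= !g_iota !clifford_mx_V1 // mx2_mul mx2_scalar.
  by rewrite mulrNN !(mul0r, mulr0, addr0, add0r).
- by rewrite raddfD /= gu gw !mx2_scalar mx2_add addr0.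
- by rewrite rmorphM /= gu gw !mx2_scalar mx2_mul !(mul0r, mulr0, addr0, add0r).
- by rewrite linearZ /= gu !mx2_scalar mx2_scale scaler0.
Qed.

Lemma clifford_mx_nm x lam y : V1 x -> Clif_even iota (@V1 F E n) y ->
  g ((1 + iota f1 * iota x) * ((iota e1 * iota f1 + lam *: (iota f1 * iota e1)) * y))
  = mx2 y 0 (iota x * y) (lam *: y).
Proof.
move=> x1 y_even; rewrite !rmorphM rmorphD rmorph1 raddfD /= linearZ /= !rmorphM /=.
by rewrite !g_iota clifford_mx_e1 clifford_mx_f1 clifford_mx_V1 // clifford_mx_even // mx2_nm.
Qed.

Lemma clifford_mx_Lam z : Clif iota O (Lam O) z ->
  forall i j, Clif iota O Lam1 (g z i j).
Proof.
apply: (gen_alg_mx_entries O1 OB g_lin g_mul) => _ [v Lv ->] i j.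
have proj_in : Clif iota O Lam1 (iota (V1_proj v)).
  apply: gen_in; exists (V1_proj v) => //.
  by split; [exact: Lam_V1_proj | exact: V1_proj_V1].
case: Lv => Ou _ Ot; rewrite g_iota; apply: mx2_entries => //.
- exact: gen_alg_scalar.
- exact: gen_alg_scalar.
- exact: gen_algN.
Qed.

End SplitClifford.

Theorem claim3p2
  (F : fieldType) (O : pred F) (hF : padic_local_field O)
  (E : falgType F) (N : E -> F) (hE : E_setting N)
  (n : nat)
  (C : algType F) (iota : Vsp E n.+1 -> C)
  (hC : is_clifford (qV N (n:=n.+1)) iota)
  (x : Vsp E n.+1) (hx : V1 x)
  (lam : F) (hlam : lam != 0)
  (y : C) (hy : GSpin iota (@V1 F E n) y) :
  let nx := 1 + iota (@f1 F E n) * iota x in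
  let m := (iota (@e1 F E n) * iota (@f1 F E n)
            + lam *: (iota (@f1 F E n) * iota (@e1 F E n))) * y in
  Clif iota O (Lam O) (nx * m)
  <->
  [/\ Clif iota O (fun v => Lam O v /\ V1 v) y,
      Clif iota O (fun v => Lam O v /\ V1 v) (lam *: y)
    & Clif iota O (fun v => Lam O v /\ V1 v) (iota x * y)].
Proof.
move=> nx m; case: hF => _ [O1 OB _] _; case: hC => iota_lin iota_sqr univ.
have [[g [[g_lin g_mul] g_iota]] _] :=
  univ _ _ (clifford_mx_linear iota_lin) (clifford_mx_sqr iota_sqr).
have [y_even _] := hy.
split=> [nm_Lam|].
- have entries := clifford_mx_Lam O1 OB g_lin g_mul g_iota nm_Lam.
  have gnm : g (nx * m) = mx2 y 0 (iota x * y) (lam *: y).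
    exact: (clifford_mx_nm iota_lin g_lin g_mul g_iota lam hx y_even).
  have [y00 _ xy10 ly11] := mx2E y 0 (iota x * y) (lam *: y).
  rewrite gnm in entries.
  by split; [rewrite -y00 | rewrite -ly11 | rewrite -xy10].
- by case; exact: (Clif_Lam_nm iota_lin iota_sqr O1 OB hx).
Qed.
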